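(* Let $\widetilde\nabla$ be the canonical snm-connection on $\mathbb R^3$ determined by $\mathsf C=\partial_z$, and let $M$ be the rotational surface $\psi(s,t)=(x(s)\cos t,x(s)\sin t,z(s))$, $s\in I$, $t\in\mathbb R$, with $I$ an open interval, $x>0$ and $x'^2+z'^2=1$. If the sectional curvature $K$ of $M$ with respect to $\widetilde\nabla$ is constant, then neither of the functions $2z'-xx'$ and $xz'-x'$ vanishes identically on $I$.
   Context: Let $\langle\cdot,\cdot\rangle$ be the Euclidean metric on $\mathbb R^3$ and $\widetilde\nabla^0$ its Levi-Civita connection (the ordinary directional derivative). Given a smooth vector field $\mathsf C$ on $\mathbb R^3$, the semi-symmetric non-metric connection (snm-connection) determined by $\mathsf C$ is $\widetilde\nabla_XY=\widetilde\nabla^0_XY+\langle \mathsf C,Y\rangle X$. Its curvature tensor is $\widetilde R(X,Y)Z=\widetilde\nabla_X\widetilde\nabla_YZ-\widetilde\nabla_Y\widetilde\nabla_XZ-\widetilde\nabla_{[X,Y]}Z$. For a surface $M$ immersed in $\mathbb R^3$, the induced connection is $\nabla_XY=(\widetilde\nabla_XY)^{\top}$ (tangential component), with curvature tensor $R$ defined by the same formula, and the sectional curvature of $M$ with respect to $\widetilde\nabla$ at $p$ is $K(p)=\frac12\big(\langle R(e_1,e_2)e_2,e_1\rangle+\langle R(e_2,e_1)e_1,e_2\rangle\big)$ for an orthonormal basis $\{e_1,e_2\}$ of $T_pM$. *)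

From Stdlib Require Import Reals.
From Coquelicot Require Import Coquelicot.
Open Scope R_scope.

Definition vec := (R * R * R)%type.
Definition mk (a b c : R) : vec := (a, b, c).
Definition v1 (v : vec) : R := fst (fst v).
Definition v2 (v : vec) : R := snd (fst v).
Definition v3 (v : vec) : R := snd v.
Definition vadd (u v : vec) : vec := mk (v1 u + v1 v) (v2 u + v2 v) (v3 u + v3 v).
Definition vscal (a : R) (v : vec) : vec := mk (a * v1 v) (a * v2 v) (a * v3 v).
Definition vsub (u v : vec) : vec := vadd u (vscal (-1) v).
Definition dot (u v : vec) : R := v1 u * v1 v + v2 u * v2 v + v3 u * v3 v.

Definition field := R -> R -> vec.

(** Partial derivatives (componentwise ordinary directional derivative,
    i.e. the Levi-Civita connection of R^3 along the coordinate directions). *)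
Definition dS (V : field) : field := fun s t =>
  mk (Derive (fun u => v1 (V u t)) s) (Derive (fun u => v2 (V u t)) s)
     (Derive (fun u => v3 (V u t)) s).
Definition dT (V : field) : field := fun s t =>
  mk (Derive (fun u => v1 (V s u)) t) (Derive (fun u => v2 (V s u)) t)
     (Derive (fun u => v3 (V s u)) t).

Definition psi (x z : R -> R) : field := fun s t => mk (x s * cos t) (x s * sin t) (z s).
Definition psi_s x z : field := dS (psi x z).
Definition psi_t x z : field := dT (psi x z).

(** Orthogonal projection of v onto span(a,b) (Gram-matrix formula). *)
Definition tproj (a b v : vec) : vec :=
  let E := dot a a in let F := dot a b in let G := dot b b in
  let D := E * G - F * F in
  vadd (vscal ((G * dot v a - F * dot v b) / D) a)
       (vscal ((E * dot v b - F * dot v a) / D) b).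

Definition Cz : vec := mk 0 0 1.

(** Induced connection of the snm-connection nabla~_X Y = D_X Y + <C,Y> X,
    along the coordinate fields psi_s, psi_t: nabla_X Y = (nabla~_X Y)^T. *)
Definition nab_s x z (V : field) : field := fun s t =>
  tproj (psi_s x z s t) (psi_t x z s t)
        (vadd (dS V s t) (vscal (dot Cz (V s t)) (psi_s x z s t))).
Definition nab_t x z (V : field) : field := fun s t =>
  tproj (psi_s x z s t) (psi_t x z s t)
        (vadd (dT V s t) (vscal (dot Cz (V s t)) (psi_t x z s t))).

(** Curvature of the induced connection on the coordinate fields
    ([psi_s, psi_t] = 0):  R(psi_s,psi_t)Z and R(psi_t,psi_s)Z. *)
Definition curvST x z (Zf : field) : field := fun s t =>
  vsub (nab_s x z (nab_t x z Zf) s t) (nab_t x z (nab_s x z Zf) s t).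
Definition curvTS x z (Zf : field) : field := fun s t =>
  vsub (nab_t x z (nab_s x z Zf) s t) (nab_s x z (nab_t x z Zf) s t).

(** Sectional curvature w.r.t. the orthonormal basis
    e1 = psi_s/|psi_s|, e2 = psi_t/|psi_t| (by tensoriality of R):
    K = 1/2 (<R(e1,e2)e2,e1> + <R(e2,e1)e1,e2>). *)
Definition sect_curv x z (s t : R) : R :=
  / 2 * (dot (curvST x z (psi_t x z) s t) (psi_s x z s t)
         + dot (curvTS x z (psi_s x z) s t) (psi_t x z s t))
  / (dot (psi_s x z s t) (psi_s x z s t) * dot (psi_t x z s t) (psi_t x z s t)).

Definition in_I (a b : Rbar) (s : R) : Prop := Rbar_lt a s /\ Rbar_lt s b.

Definition smooth_on (a b : Rbar) (f : R -> R) : Prop :=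
  forall (n : nat) (s : R), in_I a b s -> ex_derive (Derive_n f n) s.

From Stdlib Require Import Reals Lra Nsatz.
From Coquelicot Require Import Coquelicot.
Open Scope R_scope.

(* In the orthogonal frame psi_s, psi_t (with |psi_s| = 1 and |psi_t| = x) the induced
   connection is explicit, and the sectional curvature is
     K = - x''/x - x' z'/(2x) + z'^2/2 - z''/2.
   If 2 z' = x x', the unit-speed condition and its derivative turn this into
   K = (x^2 - 2)/(2 (4 + x^2)); if x z' = x', into K = (x^2 - 2)/(2 (1 + x^2)^2).
   In both cases x' never vanishes, so x is injective on I.  The first expression is
   injective in x > 0 and the second takes each value at most twice (with r = 1 + x^2 it
   is (r - 3)/(2 r^2)), so K cannot be constant. *)

Lemma in_I_locally a b s : in_I a b s -> locally s (in_I a b).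
Proof. intros Hs. exact (open_and _ _ (open_Rbar_gt a) (open_Rbar_lt b) s Hs). Qed.

Lemma in_I_between a b p q c : in_I a b p -> in_I a b q -> p <= c <= q -> in_I a b c.
Proof.
  intros [Hap _] [_ Hqb] [Hpc Hcq]. split.
  - exact (Rbar_lt_le_trans a p c Hap Hpc).
  - exact (Rbar_le_lt_trans c q b Hcq Hqb).
Qed.

Lemma in_I_exists a b : Rbar_lt a b -> exists s, in_I a b s.
Proof.
  destruct a as [a| |], b as [b| |]; simpl; intros Hab; try contradiction.
  - exists ((a + b) / 2). split; simpl; lra.
  - exists (a + 1). split; simpl; [lra | exact I].
  - exists (b - 1). split; simpl; [exact I | lra].
  - exists 0. split; exact I.
Qed.

Lemma in_I_three_points a b : Rbar_lt a b ->
  exists p q r, in_I a b p /\ in_I a b q /\ in_I a b r /\ p < q < r.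
Proof.
  intros Hab. destruct (in_I_exists a b Hab) as [s Hs].
  destruct (in_I_locally a b s Hs) as [eps Heps].
  assert (Hball : forall d, 0 <= d < eps -> in_I a b (s + d)).
  { intros d Hd. apply Heps. change (Rabs (s + d - s) < eps).
    replace (s + d - s) with d by ring. rewrite Rabs_pos_eq; lra. }
  pose proof (cond_pos eps).
  exists s, (s + eps / 4), (s + eps / 2).
  repeat split; try apply Hball; try apply Hs; lra.
Qed.

Lemma derive_neq0_injective a b f :
  (forall u, in_I a b u -> ex_derive f u) -> (forall u, in_I a b u -> Derive f u <> 0) ->
  forall p q, in_I a b p -> in_I a b q -> p < q -> f p <> f q.
Proof.
  intros Hf Hf0 p q Hp Hq Hpq Hfpq.
  assert (Hpq' : forall u, Rmin p q <= u <= Rmax p q -> in_I a b u).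
  { rewrite Rmin_left, Rmax_right by lra. intros u Hu. exact (in_I_between a b p q u Hp Hq Hu). }
  destruct (MVT_gen f p q (Derive f)) as [c [Hc Hfc]].
  - intros u Hu. apply Derive_correct, Hf, Hpq'. lra.
  - intros u Hu. apply continuity_pt_filterlim, (@ex_derive_continuous R_AbsRing R_NormedModule), Hf, Hpq', Hu.
  - apply (Hf0 c (Hpq' c ltac:(lra))), (Rmult_eq_reg_r (q - p)); lra.
Qed.

Definition rot_s (x z : R -> R) s t : vec :=
  mk (Derive x s * cos t) (Derive x s * sin t) (Derive z s).
Definition rot_t (x : R -> R) s t : vec := mk (- (x s * sin t)) (x s * cos t) 0.
Definition rot_comb x z s t (f g : R) : vec :=
  vadd (vscal f (rot_s x z s t)) (vscal g (rot_t x s t)).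

Ltac vec_unfold :=
  unfold rot_comb, rot_s, rot_t, dot, vsub, vadd, vscal, Cz, mk, v1, v2, v3; simpl.

Ltac eta_reduce :=
  repeat match goal with |- context [fun y : R => ?h y] => change (fun y : R => h y) with h end.

(* [nsatz] fails on powers and on hypotheses that are not real equations,
   so both are removed first. *)
Ltac poly_nsatz :=
  repeat match goal with H : ?A |- _ =>
    lazymatch type of A with Prop => lazymatch A with @eq R _ _ => fail | _ => clear H end end
  end;
  cbn [pow] in *; nsatz.

Ltac trig_nsatz t := pose proof (sin2_cos2 t); unfold Rsqr in *; poly_nsatz.

Lemma psi_s_rot x z s t : psi_s x z s t = rot_s x z s t.
Proof. unfold psi_s, dS, psi, rot_s, mk, v1, v2, v3; simpl. now rewrite !Derive_scal_l. Qed.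

Lemma psi_t_rot x z s t : psi_t x z s t = rot_t x s t.
Proof.
  unfold psi_t, dT, psi, rot_t, mk, v1, v2, v3; simpl.
  rewrite !Derive_scal, Derive_const, (is_derive_unique _ _ _ (is_derive_cos t)),
    (is_derive_unique _ _ _ (is_derive_sin t)).
  f_equal; f_equal; ring.
Qed.

Lemma psi_s_comb x z s t : psi_s x z s t = rot_comb x z s t 1 0.
Proof. rewrite psi_s_rot. vec_unfold. f_equal; f_equal; ring. Qed.

Lemma psi_t_comb x z s t : psi_t x z s t = rot_comb x z s t 0 1.
Proof. rewrite psi_t_rot. vec_unfold. f_equal; f_equal; ring. Qed.

Lemma rot_comb_sub x z s t f1 g1 f2 g2 :
  vsub (rot_comb x z s t f1 g1) (rot_comb x z s t f2 g2) = rot_comb x z s t (f1 - f2) (g1 - g2).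
Proof. vec_unfold. f_equal; [f_equal|]; ring. Qed.

Section UnitSpeed.
Variables (x z : R -> R) (s t : R).
Hypothesis unit_speed : Derive x s ^ 2 + Derive z s ^ 2 = 1.

Lemma dot_rot_s_s : dot (rot_s x z s t) (rot_s x z s t) = 1.
Proof. vec_unfold. trig_nsatz t. Qed.

Lemma dot_rot_comb_s f g : dot (rot_comb x z s t f g) (rot_s x z s t) = f.
Proof. vec_unfold. trig_nsatz t. Qed.

End UnitSpeed.

Lemma dot_rot_t_t x s t : dot (rot_t x s t) (rot_t x s t) = x s ^ 2.
Proof. vec_unfold. trig_nsatz t. Qed.

Lemma dot_rot_s_t x z s t : dot (rot_s x z s t) (rot_t x s t) = 0.
Proof. vec_unfold. ring. Qed.

Lemma dot_rot_comb_t x z s t f g : dot (rot_comb x z s t f g) (rot_t x s t) = g * x s ^ 2.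
Proof. vec_unfold. trig_nsatz t. Qed.

Lemma tproj_rot x z s t v f g :
  Derive x s ^ 2 + Derive z s ^ 2 = 1 -> x s <> 0 ->
  dot v (rot_s x z s t) = f -> dot v (rot_t x s t) = g * x s ^ 2 ->
  tproj (rot_s x z s t) (rot_t x s t) v = rot_comb x z s t f g.
Proof.
  intros Hunit Hx Hvs Hvt. unfold tproj, rot_comb.
  rewrite Hvs, Hvt, dot_rot_s_s, dot_rot_s_t, dot_rot_t_t by exact Hunit.
  f_equal; f_equal; field; auto.
Qed.

Lemma dS_rot_comb (x z f g : R -> R) (V : field) (s t : R) :
  ex_derive x s -> ex_derive (Derive x) s -> ex_derive z s -> ex_derive (Derive z) s ->
  ex_derive f s -> ex_derive g s ->
  locally s (fun u => V u t = rot_comb x z u t (f u) (g u)) ->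
  dS V s t = mk
    (Derive f s * Derive x s * cos t + f s * Derive (Derive x) s * cos t
     - Derive g s * x s * sin t - g s * Derive x s * sin t)
    (Derive f s * Derive x s * sin t + f s * Derive (Derive x) s * sin t
     + Derive g s * x s * cos t + g s * Derive x s * cos t)
    (Derive f s * Derive z s + f s * Derive (Derive z) s).
Proof.
  intros Hx Hx' Hz Hz' Hf Hg HV. unfold dS.
  rewrite (Derive_ext_loc (fun u => v1 (V u t))
             (fun u => f u * Derive x u * cos t - g u * x u * sin t)),
          (Derive_ext_loc (fun u => v2 (V u t))
             (fun u => f u * Derive x u * sin t + g u * x u * cos t)),
          (Derive_ext_loc (fun u => v3 (V u t)) (fun u => f u * Derive z u)).
  - unfold mk; f_equal; [f_equal|]; apply is_derive_unique; auto_derive; auto; eta_reduce; ring.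
  all: revert HV; apply filter_imp; intros u ->; vec_unfold; ring.
Qed.

Lemma dT_rot_comb (x z : R -> R) (V : field) (f g s t : R) :
  (forall u, V s u = rot_comb x z s u f g) ->
  dT V s t = mk (- (f * Derive x s * sin t) - g * x s * cos t)
                (f * Derive x s * cos t - g * x s * sin t) 0.
Proof.
  intros HV. unfold dT.
  rewrite (Derive_ext (fun u => v1 (V s u)) (fun u => f * Derive x s * cos u - g * x s * sin u)),
          (Derive_ext (fun u => v2 (V s u)) (fun u => f * Derive x s * sin u + g * x s * cos u)),
          (Derive_ext (fun u => v3 (V s u)) (fun _ => f * Derive z s)).
  - rewrite Derive_const. unfold mk; f_equal; f_equal;
      apply is_derive_unique; auto_derive; auto; ring.
  all: intros u; rewrite HV; vec_unfold; ring.
Qed.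

Record unit_speed_profile (a b : Rbar) (x z : R -> R) : Prop := {
  profile_ex_derive_x : forall s, in_I a b s -> ex_derive x s;
  profile_ex_derive2_x : forall s, in_I a b s -> ex_derive (Derive x) s;
  profile_ex_derive_z : forall s, in_I a b s -> ex_derive z s;
  profile_ex_derive2_z : forall s, in_I a b s -> ex_derive (Derive z) s;
  profile_pos : forall s, in_I a b s -> 0 < x s;
  profile_unit_speed : forall s, in_I a b s -> Derive x s ^ 2 + Derive z s ^ 2 = 1 }.

Arguments profile_ex_derive_x {a b x z}. Arguments profile_ex_derive2_x {a b x z}.
Arguments profile_ex_derive_z {a b x z}. Arguments profile_ex_derive2_z {a b x z}.
Arguments profile_pos {a b x z}. Arguments profile_unit_speed {a b x z}.

Ltac profile_facts P s Hs :=
  pose proof (profile_ex_derive_x P s Hs); pose proof (profile_ex_derive2_x P s Hs);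
  pose proof (profile_ex_derive_z P s Hs); pose proof (profile_ex_derive2_z P s Hs);
  pose proof (profile_pos P s Hs).

Lemma smooth_unit_speed_profile a b x z :
  smooth_on a b x -> smooth_on a b z ->
  (forall s, in_I a b s -> 0 < x s) ->
  (forall s, in_I a b s -> Derive x s ^ 2 + Derive z s ^ 2 = 1) ->
  unit_speed_profile a b x z.
Proof.
  intros Hx Hz Hpos Hunit. split; auto; intros s.
  - exact (Hx 0%nat s). - exact (Hx 1%nat s). - exact (Hz 0%nat s). - exact (Hz 1%nat s).
Qed.

Definition rot_curvature (x z : R -> R) s :=
  - Derive (Derive x) s / x s - Derive x s * Derive z s / (2 * x s)
  + Derive z s ^ 2 / 2 - Derive (Derive z) s / 2.

Section Curvature.
Variables (a b : Rbar) (x z : R -> R).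
Hypothesis P : unit_speed_profile a b x z.

Lemma profile_unit_speed_derive s : in_I a b s ->
  Derive x s * Derive (Derive x) s + Derive z s * Derive (Derive z) s = 0.
Proof.
  intros Hs. profile_facts P s Hs.
  assert (Hconst : is_derive (fun u => Derive x u ^ 2 + Derive z u ^ 2) s 0).
  { apply (is_derive_ext_loc (fun _ => 1)); [|auto_derive; auto].
    apply (filter_imp (in_I a b)); [|exact (in_I_locally a b s Hs)].
    intros u Hu; symmetry; exact (profile_unit_speed P u Hu). }
  assert (Hprod : is_derive (fun u => Derive x u ^ 2 + Derive z u ^ 2) s
     (2 * (Derive x s * Derive (Derive x) s + Derive z s * Derive (Derive z) s))).
  { auto_derive; auto. eta_reduce. ring. }
  pose proof (is_derive_unique _ _ _ Hconst). pose proof (is_derive_unique _ _ _ Hprod). lra.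
Qed.

Lemma nab_s_rot_comb (V : field) (f g : R -> R) (s t : R) :
  in_I a b s -> ex_derive f s -> ex_derive g s ->
  (forall u, in_I a b u -> V u t = rot_comb x z u t (f u) (g u)) ->
  nab_s x z V s t =
    rot_comb x z s t (Derive f s + f s * Derive z s) (Derive g s + g s * Derive x s / x s).
Proof.
  intros Hs Hf Hg HV.
  profile_facts P s Hs. pose proof (profile_unit_speed P s Hs).
  pose proof (profile_unit_speed_derive s Hs). assert (x s <> 0) by lra.
  unfold nab_s. rewrite psi_s_rot, psi_t_rot.
  assert (Hloc : locally s (fun u => V u t = rot_comb x z u t (f u) (g u)))
    by exact (filter_imp _ _ HV (in_I_locally a b s Hs)).
  rewrite (dS_rot_comb x z f g V s t), (HV s Hs) by auto.
  apply tproj_rot; auto.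
  - vec_unfold. trig_nsatz t.
  - replace ((Derive g s + g s * Derive x s / x s) * x s ^ 2)
      with (Derive g s * x s ^ 2 + g s * Derive x s * x s) by (field; auto).
    vec_unfold. trig_nsatz t.
Qed.

Lemma nab_t_rot_comb (V : field) (f g s t : R) : in_I a b s ->
  (forall u, V s u = rot_comb x z s u f g) ->
  nab_t x z V s t =
    rot_comb x z s t (- (g * x s * Derive x s)) (f * Derive x s / x s + f * Derive z s).
Proof.
  intros Hs HV.
  profile_facts P s Hs. pose proof (profile_unit_speed P s Hs). assert (x s <> 0) by lra.
  unfold nab_t. rewrite psi_s_rot, psi_t_rot, (dT_rot_comb x z V f g s t HV), HV.
  apply tproj_rot; auto.
  - vec_unfold. trig_nsatz t.
  - replace ((f * Derive x s / x s + f * Derive z s) * x s ^ 2)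
      with (f * Derive x s * x s + f * Derive z s * x s ^ 2) by (field; auto).
    vec_unfold. trig_nsatz t.
Qed.

Lemma sect_curv_rot s t : in_I a b s -> sect_curv x z s t = rot_curvature x z s.
Proof.
  intros Hs. profile_facts P s Hs. pose proof (profile_unit_speed P s Hs).
  assert (x s <> 0) by lra.
  assert (Htt : forall u t, in_I a b u ->
            nab_t x z (psi_t x z) u t = rot_comb x z u t (- (x u * Derive x u)) 0).
  { intros u t' Hu. rewrite (nab_t_rot_comb _ 0 1); auto using psi_t_comb.
    f_equal; unfold Rdiv; ring. }
  assert (Hst : forall u t, in_I a b u ->
            nab_s x z (psi_t x z) u t = rot_comb x z u t 0 (Derive x u / x u)).
  { intros u t' Hu. rewrite (nab_s_rot_comb _ (fun _ => 0) (fun _ => 1)); auto using psi_t_comb.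
    - rewrite !Derive_const. f_equal; unfold Rdiv; ring.
    - apply ex_derive_const. - apply ex_derive_const. }
  assert (Hss : forall u t, in_I a b u ->
            nab_s x z (psi_s x z) u t = rot_comb x z u t (Derive z u) 0).
  { intros u t' Hu. rewrite (nab_s_rot_comb _ (fun _ => 1) (fun _ => 0)); auto using psi_s_comb.
    - rewrite !Derive_const. f_equal; unfold Rdiv; ring.
    - apply ex_derive_const. - apply ex_derive_const. }
  assert (Hts : forall u t, in_I a b u ->
            nab_t x z (psi_s x z) u t = rot_comb x z u t 0 (Derive x u / x u + Derive z u)).
  { intros u t' Hu. rewrite (nab_t_rot_comb _ 1 0); auto using psi_s_comb.
    f_equal; unfold Rdiv; ring. }
  assert (D1 : is_derive (fun u => - (x u * Derive x u)) s
                 (- (Derive x s * Derive x s + x s * Derive (Derive x) s))).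
  { auto_derive; auto. eta_reduce. ring. }
  assert (D2 : is_derive (fun u => Derive x u / x u + Derive z u) s
                 ((Derive (Derive x) s * x s - Derive x s * Derive x s) / x s ^ 2
                  + Derive (Derive z) s)).
  { auto_derive; auto. eta_reduce. field. auto. }
  unfold sect_curv, curvST, curvTS.
  rewrite (nab_s_rot_comb _ _ _ s t Hs (ex_intro _ _ D1) (ex_derive_const _ _) (fun u => Htt u t)),
    (nab_t_rot_comb _ _ _ s t Hs (fun u => Hst s u Hs)),
    (nab_t_rot_comb _ _ _ s t Hs (fun u => Hss s u Hs)),
    (nab_s_rot_comb _ _ _ s t Hs (ex_derive_const _ _) (ex_intro _ _ D2) (fun u => Hts u t)),
    !rot_comb_sub, !psi_s_rot, !psi_t_rot, dot_rot_comb_s, dot_rot_comb_t,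
    dot_rot_s_s, dot_rot_t_t, (is_derive_unique _ _ _ D1), (is_derive_unique _ _ _ D2)
    by auto.
  unfold rot_curvature. field. auto.
Qed.

Lemma rot_curvature_2dz_eq_x_dx s : in_I a b s ->
  (forall u, in_I a b u -> 2 * Derive z u - x u * Derive x u = 0) ->
  Derive x s <> 0 /\ rot_curvature x z s = (x s ^ 2 - 2) / (2 * (4 + x s ^ 2)).
Proof.
  intros Hs Hdz. profile_facts P s Hs.
  pose proof (profile_unit_speed P s Hs) as Hunit.
  pose proof (profile_unit_speed_derive s Hs) as Hunit'.
  assert (Z1 : Derive z s = x s * Derive x s / 2) by (specialize (Hdz s Hs); lra).
  assert (Z2 : Derive (Derive z) s = (Derive x s ^ 2 + x s * Derive (Derive x) s) / 2).
  { rewrite (Derive_ext_loc _ (fun u => x u * Derive x u / 2)).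
    - apply is_derive_unique. auto_derive; auto. eta_reduce. field.
    - apply (filter_imp (in_I a b)); [|exact (in_I_locally a b s Hs)].
      intros u Hu. specialize (Hdz u Hu). lra. }
  unfold rot_curvature. rewrite Z1, Z2 in *.
  set (X := x s) in *. set (X1 := Derive x s) in *. set (X2 := Derive (Derive x) s) in *.
  clearbody X X1 X2.
  assert (Hspeed : X1 ^ 2 * (4 + X ^ 2) = 4) by nra.
  assert (HX1 : X1 <> 0) by (intros ->; lra).
  assert (Haccel : X2 * (4 + X ^ 2) + X * X1 ^ 2 = 0).
  { apply (Rmult_eq_reg_l X1); [nra | exact HX1]. }
  split; [exact HX1|].
  assert (X <> 0) by lra. assert (4 + X ^ 2 <> 0) by nra.
  field_simplify_eq; [|auto]. poly_nsatz.
Qed.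

Lemma rot_curvature_x_dz_eq_dx s : in_I a b s ->
  (forall u, in_I a b u -> x u * Derive z u - Derive x u = 0) ->
  Derive x s <> 0 /\ rot_curvature x z s = (x s ^ 2 - 2) / (2 * (1 + x s ^ 2) ^ 2).
Proof.
  intros Hs Hdz. profile_facts P s Hs.
  pose proof (profile_unit_speed P s Hs) as Hunit.
  pose proof (profile_unit_speed_derive s Hs) as Hunit'.
  assert (x s <> 0) by lra.
  assert (Hdz_div : forall u, in_I a b u -> Derive z u = Derive x u / x u).
  { intros u Hu. specialize (Hdz u Hu). pose proof (profile_pos P u Hu).
    field_simplify_eq; lra. }
  assert (Z2 : Derive (Derive z) s =
                 (Derive (Derive x) s * x s - Derive x s ^ 2) / x s ^ 2).
  { rewrite (Derive_ext_loc _ (fun u => Derive x u / x u)).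
    - apply is_derive_unique. auto_derive; auto. eta_reduce. field. auto.
    - exact (filter_imp _ _ Hdz_div (in_I_locally a b s Hs)). }
  unfold rot_curvature. rewrite (Hdz_div s Hs), Z2 in *.
  set (X := x s) in *. set (X1 := Derive x s) in *. set (X2 := Derive (Derive x) s) in *.
  clearbody X X1 X2.
  assert (Hspeed : X1 ^ 2 * (1 + X ^ 2) = X ^ 2).
  { field_simplify_eq in Hunit; [auto|lra]. }
  assert (HX1 : X1 <> 0) by (intros ->; nra).
  assert (Haccel : X2 * (X ^ 3 + X) = X1 ^ 2).
  { apply (Rmult_eq_reg_l X1); [|exact HX1]. field_simplify_eq in Hunit'; [auto|nra]. }
  split; [exact HX1|].
  assert (1 + X ^ 2 <> 0) by nra.
  field_simplify_eq; [|auto]. poly_nsatz.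
Qed.

End Curvature.

Lemma sqr_sub2_div_add4_inj (u v : R) : 0 < u -> 0 < v ->
  (u ^ 2 - 2) / (2 * (4 + u ^ 2)) = (v ^ 2 - 2) / (2 * (4 + v ^ 2)) -> u = v.
Proof.
  intros Hu Hv Huv.
  assert (Hsq : 6 * (u ^ 2 - v ^ 2) = 0).
  { field_simplify_eq in Huv; [split; nra | lra]. }
  nra.
Qed.

Lemma sub3_div_sqr_eq (r r' : R) : r <> 0 -> r' <> 0 -> r <> r' ->
  (r - 3) / r ^ 2 = (r' - 3) / r' ^ 2 -> r * r' = 3 * (r + r').
Proof.
  intros Hr Hr' Hrr' Heq.
  assert (Hfac : (r' - r) * (r * r' - 3 * (r + r')) = 0).
  { field_simplify_eq in Heq; [split; auto | nra]. }
  apply Rmult_integral in Hfac as [Hfac | Hfac]; lra.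
Qed.

Lemma sqr_sub2_div_add1_sqr_three_values (u v w : R) :
  0 < u -> 0 < v -> 0 < w -> u <> v -> v <> w -> u <> w ->
  (u ^ 2 - 2) / (2 * (1 + u ^ 2) ^ 2) = (v ^ 2 - 2) / (2 * (1 + v ^ 2) ^ 2) ->
  (u ^ 2 - 2) / (2 * (1 + u ^ 2) ^ 2) = (w ^ 2 - 2) / (2 * (1 + w ^ 2) ^ 2) -> False.
Proof.
  intros Hu Hv Hw Huv Hvw Huw Heqv Heqw.
  assert (Hshift : forall y, (y ^ 2 - 2) / (2 * (1 + y ^ 2) ^ 2)
                             = ((1 + y ^ 2) - 3) / (1 + y ^ 2) ^ 2 / 2).
  { intros y. field. nra. }
  rewrite !Hshift in Heqv, Heqw.
  assert (Hv' : (1 + u ^ 2) * (1 + v ^ 2) = 3 * ((1 + u ^ 2) + (1 + v ^ 2))).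
  { apply sub3_div_sqr_eq; [nra | nra | intros Heq; apply Huv; nra | lra]. }
  assert (Hw' : (1 + u ^ 2) * (1 + w ^ 2) = 3 * ((1 + u ^ 2) + (1 + w ^ 2))).
  { apply sub3_div_sqr_eq; [nra | nra | intros Heq; apply Huw; nra | lra]. }
  assert (Hfac : (v ^ 2 - w ^ 2) * ((1 + u ^ 2) - 3) = 0) by nra.
  apply Rmult_integral in Hfac as [Hfac | Hfac]; [apply Hvw; nra | nra].
Qed.

Theorem proposition4p2 (a b : Rbar) (x z : R -> R) :
  Rbar_lt a b ->
  smooth_on a b x -> smooth_on a b z ->
  (forall s, in_I a b s -> 0 < x s) ->
  (forall s, in_I a b s -> (Derive x s) ^ 2 + (Derive z s) ^ 2 = 1) ->
  (exists k : R, forall s t : R, in_I a b s -> sect_curv x z s t = k) ->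
  ~ (forall s, in_I a b s -> 2 * Derive z s - x s * Derive x s = 0) /\
  ~ (forall s, in_I a b s -> x s * Derive z s - Derive x s = 0).
Proof.
  intros Hab Hx Hz Hpos Hunit [k Hk].
  pose proof (smooth_unit_speed_profile a b x z Hx Hz Hpos Hunit) as P.
  assert (Hconst : forall s, in_I a b s -> rot_curvature x z s = k).
  { intros s Hs. rewrite <- (sect_curv_rot a b x z P s 0 Hs). exact (Hk s 0 Hs). }
  assert (Hinj : (forall s, in_I a b s -> Derive x s <> 0) ->
                 forall p q, in_I a b p -> in_I a b q -> p < q -> x p <> x q).
  { intros Hdx. apply derive_neq0_injective. exact (profile_ex_derive_x P). exact Hdx. }
  destruct (in_I_three_points a b Hab) as (p & q & r & Hp & Hq & Hr & Hpq & Hqr).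
  split; intros Hcase.
  - pose (HK := fun s Hs => rot_curvature_2dz_eq_x_dx a b x z P s Hs Hcase).
    apply (Hinj (fun s Hs => proj1 (HK s Hs)) p q Hp Hq Hpq).
    apply sqr_sub2_div_add4_inj; auto.
    rewrite <- (proj2 (HK p Hp)), <- (proj2 (HK q Hq)), !Hconst; auto.
  - pose (HK := fun s Hs => rot_curvature_x_dz_eq_dx a b x z P s Hs Hcase).
    pose proof (Hinj (fun s Hs => proj1 (HK s Hs))) as Hinj'.
    apply (sqr_sub2_div_add1_sqr_three_values (x p) (x q) (x r)); auto.
    + apply Hinj'; auto; lra.
    + rewrite <- (proj2 (HK p Hp)), <- (proj2 (HK q Hq)), !Hconst; auto.
    + rewrite <- (proj2 (HK p Hp)), <- (proj2 (HK r Hr)), !Hconst; auto.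
Qed.
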